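(* Let $-\infty<a<b<\infty$, let $y:[a,b]\to\mathbb{R}$ be $L$-Lipschitz, and let $\gamma(t)=t+iy(t)$. Suppose $z_i\in\mathbb{C}$ and $\beta_i>0$ for $i=1,\dots,m$, with $\sum_{i=1}^m\beta_i=\beta<1$. Then $$\int_a^b\prod_{i=1}^m\left(\frac{1}{|\gamma(t)-z_i|}\right)^{\beta_i}|\gamma'(t)|\,dt<\mathrm{Const}_{L,a,b,\beta},$$ where $\mathrm{Const}_{L,a,b,\beta}$ is a constant depending only on $L,a,b,\beta$.
   Context: $|\gamma'(t)|=\sqrt{1+y'(t)^2}$, defined for almost every $t$. A function $y$ is $L$-Lipschitz if $|y(t_1)-y(t_2)|\le L|t_1-t_2|$ for all $t_1,t_2$. *)

From HB Require Import structures.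
From mathcomp Require Import all_boot all_order all_algebra.
From mathcomp Require Import all_classical all_reals all_analysis.
From mathcomp Require Import complex.
Set Implicit Arguments. Unset Strict Implicit. Unset Printing Implicit Defensive.
Import Order.TTheory GRing.Theory Num.Theory.
Local Open Scope ring_scope.

Definition Lipschitz_on_interval (R : realType) (a b L : R) (y : R -> R) : Prop :=
  forall t1 t2, t1 \in `[a, b] -> t2 \in `[a, b] ->
    `|y t1 - y t2| <= L * `|t1 - t2|.

Definition graph_curve (R : realType) (y : R -> R) (t : R) : R[i] :=
  (t +i* y t)%C.

(* |gamma'(t)| = sqrt(1 + y'(t)^2), meaningful for a.e. t *)
Definition speed (R : realType) (y : R -> R) (t : R) : R :=
  Num.sqrt (1 + (derive1 y t) ^+ 2).

Definition weight_integrand (R : realType) (m : nat) (z : 'I_m -> R[i])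
    (beta : 'I_m -> R) (y : R -> R) (t : R) : R :=
  (\prod_(i < m) ((ComplexField.Normc.normc (graph_curve y t - z i))^-1 `^ beta i)) * speed y t.

(* By the weighted AM-GM inequality with weights beta_i / beta, the product
   prod_i |gamma(t) - z_i|^(-beta_i) is at most 1 + sum_i (beta_i / beta) |t - Re z_i|^(-beta),
   and |gamma'(t)| <= sqrt (1 + L^2) on ]a, b[.  Each |t - x|^(-beta) is dominated by the
   dyadic step function 1 + sum_k 2^(beta (k+1)) 1_{|t - x| <= 2^-k}, whose integral over
   [a, b] is at most (b - a) + 2^(beta+1) / (1 - 2^(beta-1)) whatever x is; this is finite
   exactly because beta < 1.  The majorant is +oo at its centre, which also absorbs the two
   endpoints, where y' is not controlled by the Lipschitz bound on [a, b]. *)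

From mathcomp Require Import all_boot all_order all_algebra.
From mathcomp Require Import all_classical all_reals all_analysis.
From mathcomp Require Import measurable_realfun.
From mathcomp Require Import complex.
From mathcomp Require Import ring lra.
Import Order.TTheory GRing.Theory Num.Theory.
Import numFieldNormedType.Exports.
Local Open Scope ring_scope.
Local Open Scope classical_set_scope.

Section weighted_am_gm.
Variable R : realType.

Lemma weighted_am_gm {m : nat} (x w : 'I_m -> R) :
  (forall i, 0 <= x i) -> (forall i, 0 < w i) -> \sum_i w i = 1 ->
  \prod_i x i `^ w i <= \sum_i w i * x i.
Proof.
move=> x0 w0 w1.
have [[j xj0]|/forallNP xN0] := pselect (exists j, x j = 0).
  rewrite (bigD1 j) //= xj0 powR0 ?gt_eqF // mul0r.
  by apply: sumr_ge0 => i _; rewrite mulr_ge0 // ltW.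
have x_gt0 i : 0 < x i by rewrite lt_neqAle eq_sym x0 andbT; apply/eqP/xN0.
pose c := \sum_i w i * ln (x i).
have -> : \prod_i x i `^ w i = expR c.
  by rewrite expR_sum; apply: eq_bigr => i _; rewrite /powR gt_eqF.
(* expR lies above its tangent line at c *)
have tangent i : expR c * (1 + (ln (x i) - c)) <= x i.
  rewrite -[leRHS](lnK (x_gt0 i)) -[in leRHS](subrK c (ln (x i))) expRD mulrC.
  by rewrite ler_wpM2r ?expR_ge0 ?expR_ge1Dx.
apply: le_trans (_ : \sum_i w i * (expR c * (1 + (ln (x i) - c))) <= _); last first.
  by apply: ler_sum => i _; rewrite ler_wpM2l ?tangent // ltW.
rewrite (eq_bigr (fun i => expR c * (w i + (w i * ln (x i) - w i * c)))); last first.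
  by move=> i _; ring.
rewrite -mulr_sumr big_split /= big_split /= sumrN -mulr_suml w1 -/c.
by rewrite mul1r subrr addr0 mulr1.
Qed.

Lemma prod_powR_le_weighted_sum {m : nat} (x bt : 'I_m -> R) :
  (forall i, 0 <= x i) -> (forall i, 0 < bt i) ->
  \prod_i x i `^ bt i <= 1 + \sum_i (bt i / \sum_j bt j) * x i `^ (\sum_j bt j).
Proof.
(* the summand 1 accounts for the empty family *)
case: m x bt => [|n] x bt x0 bt0; first by rewrite !big_ord0 lerDl.
set s := \sum_j bt j.
have s_gt0 : 0 < s.
  by rewrite /s big_ord_recl ltr_pwDl // sumr_ge0 // => i _; rewrite ltW.
apply: ler_wpDl => //.
have -> : \prod_i x i `^ bt i = \prod_i (x i `^ s) `^ (bt i / s).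
  by apply: eq_bigr => i _; rewrite -powRrM mulrCA divff ?mulr1 ?gt_eqF.
apply: weighted_am_gm => [i|i|]; first exact: powR_ge0.
  by rewrite divr_gt0.
by rewrite -mulr_suml divff ?gt_eqF.
Qed.

End weighted_am_gm.

Lemma ltr1_powR (R : realType) (a x : R) : 1 < a -> x < 1 -> a `^ x < a.
Proof.
move=> a1 x1; have a0 : 0 < a by exact: lt_trans a1.
rewrite /powR gt_eqF // -[ltRHS]lnK ?posrE // ltr_expR gtr_pMl //.
exact: ln_gt0.
Qed.

Lemma eseries_ge1_eqy (R : realType) (u : (\bar R)^nat) :
  (forall k, 1 <= u k)%E -> (\sum_(k <oo) u k = +oo)%E.
Proof.
move=> u1; apply/eqP; rewrite eq_le leey /=.
have -> : (+oo = \sum_(k <oo) (1 : \bar R))%E.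
  apply/esym/cvg_lim => //.
  rewrite (_ : (fun n => _) = fun n : nat => (n%:R : R)%:E); first exact/cvgenyP.
  by apply/funext => n; rewrite sumEFin sumr_const_nat subn0.
apply: lee_nneseries => // k _ _; exact: lee01.
Qed.

Lemma nneseries_geometric_le (R : realType) (q z : R) : 0 <= q -> 0 < z < 1 ->
  (\sum_(k <oo) (geometric q z k)%:E <= (q / (1 - z))%:E)%E.
Proof.
move=> q0 /andP[z0 z1]; apply: lime_le.
  by apply: is_cvg_nneseries => k _ _; rewrite lee_fin geometric_ge0 // ltW.
apply: nearW => n; rewrite sumEFin lee_fin.
by apply: geometric_le_lim; rewrite // gtr0_norm.
Qed.

(* No measurability is required: the integrals of nonnegative functions are
   compared through the suprema of simple functions that define them.  This is
   needed because the integrand below involves [derive1 y]. *)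
Lemma ge0_le_integral_nonmeasurable {d} {T : measurableType d} {R : realType}
    {mu : {measure set T -> \bar R}} {D : set T} {f g : T -> \bar R} :
  (forall x, D x -> 0 <= f x)%E -> (forall x, D x -> f x <= g x)%E ->
  (\int[mu]_(x in D) f x <= \int[mu]_(x in D) g x)%E.
Proof.
move=> f0 fg; have g0 x : D x -> (0 <= g x)%E.
  by move=> Dx; exact: le_trans (f0 x Dx) (fg x Dx).
rewrite ge0_integralE // [leRHS]ge0_integralE //.
apply: le_ereal_sup => _ [h /= hf <-]; exists h => //= x.
by apply: le_trans (hf x) _; rewrite /patch; case: ifP => // /set_mem /fg.
Qed.

Lemma integral_itv_cst (R : realType) (a b c : R) : a < b ->
  (\int[lebesgue_measure]_(t in `[a, b]) c%:E = (c * (b - a))%:E)%E.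
Proof.
move=> ab; rewrite integral_cst ?EFinM; last exact: measurable_itv.
by congr (_ * _)%E; have := lebesgue_measure_itv `[a, b]%R; rewrite /= lte_fin ab -EFinD.
Qed.

Lemma normc_ge_dist_Re (R : realType) (t w : R) (z : R[i]) :
  `|t - complex.Re z| <= ComplexField.Normc.normc ((t +i* w)%C - z).
Proof.
case: z => p q /=; rewrite -(sqrtr_sqr (t - p)) ler_sqrt ?addr_ge0 ?sqr_ge0 //.
by rewrite lerDl sqr_ge0.
Qed.

Section dyadic_majorant.
Context {R : realType}.
Implicit Types (r x t : R) (k : nat).

Definition dyadic_interval x k : set R := [set` `[x - 2 ^- k, x + 2 ^- k]%R].

Definition dyadic_term r x k t : R := r ^+ k.+1 * \1_(dyadic_interval x k) t.

(* With r = 2 `^ s it dominates |t - x| `^ (-s), see powR_le_dyadic_majorant. *)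
Definition dyadic_majorant r x t : \bar R :=
  (1 + \sum_(k <oo) (dyadic_term r x k t)%:E)%E.

(* (b - a) + sum_k r ^+ k.+1 * (2 * 2 ^- k), the geometric series converging for r < 2 *)
Definition dyadic_majorant_bound a b r := b - a + 2 * r / (1 - r / 2).

Lemma indic_dyadic_interval x t k :
  `|t - x| <= 2 ^- k -> \1_(dyadic_interval x k) t = 1 :> R.
Proof.
rewrite ler_norml => /andP[? ?]; rewrite indicE mem_set // /dyadic_interval /= in_itv /=.
by apply/andP; split; lra.
Qed.

Lemma lebesgue_measure_dyadic_interval x k :
  lebesgue_measure (dyadic_interval x k) = (2 * 2 ^- k)%:E.
Proof.
rewrite lebesgue_measure_itv /= lte_fin ltrBlDr -addrA ltrDl addr_gt0 ?invr_gt0 ?exprn_gt0 //.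
by rewrite -EFinD; congr (_%:E); ring.
Qed.

Lemma dyadic_term_ge0 r x k t : 0 <= r -> 0 <= dyadic_term r x k t.
Proof. by move=> r0; rewrite mulr_ge0 ?exprn_ge0. Qed.

Lemma measurable_dyadic_term (D : set R) r x k : measurable_fun D (dyadic_term r x k).
Proof.
apply: measurable_funM; first exact: measurable_cst.
by apply: measurable_indic; exact: measurable_itv.
Qed.

Lemma integral_dyadic_term_le a b r x k : 0 <= r ->
  (\int[lebesgue_measure]_(t in `[a, b]) (dyadic_term r x k t)%:E
     <= (geometric (2 * r) (r / 2) k)%:E)%E.
Proof.
move=> r0; under eq_integral => t _ do rewrite EFinM.
rewrite ge0_integralZl_EFin ?exprn_ge0 //; last first.
  by apply/measurable_EFinP; apply: measurable_indic; exact: measurable_itv.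
rewrite integral_indic //; last exact: measurable_itv.
apply: le_trans (_ : (r ^+ k.+1)%:E * lebesgue_measure (dyadic_interval x k) <= _)%E.
  apply: lee_wpmul2l; first by rewrite lee_fin exprn_ge0.
  apply: le_measure; last exact: subIsetl.
  - by rewrite inE; apply: measurableI; exact: measurable_itv.
  - by rewrite inE; exact: measurable_itv.
rewrite lebesgue_measure_dyadic_interval -EFinM lee_fin /geometric /= exprS expr_div_n.
by rewrite le_eqVlt; apply/orP; left; apply/eqP; field; rewrite expf_neq0.
Qed.

Lemma dyadic_majorant_ge1 r x t : 0 <= r -> (1 <= dyadic_majorant r x t)%E.
Proof.
move=> r0; rewrite leeDl //; apply: nneseries_ge0 => k _ _.
by rewrite lee_fin dyadic_term_ge0.
Qed.

Lemma dyadic_majorant_ge0 r x t : 0 <= r -> (0 <= dyadic_majorant r x t)%E.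
Proof. by move=> r0; exact: le_trans lee01 (dyadic_majorant_ge1 r x t r0). Qed.

Lemma dyadic_majorant_ge_term r x t k : 0 <= r -> `|t - x| <= 2 ^- k ->
  ((r ^+ k.+1)%:E <= dyadic_majorant r x t)%E.
Proof.
move=> r0 txk; apply: le_trans (leeDr _ lee01).
apply: le_trans (nneseries_lim_ge k.+1 _) => [|i _ _]; last first.
  by rewrite lee_fin dyadic_term_ge0.
rewrite big_nat_recr //= /dyadic_term indic_dyadic_interval // mulr1.
by rewrite leeDr // sume_ge0 // => i _; rewrite lee_fin dyadic_term_ge0.
Qed.

Lemma dyadic_majorant_center r x : 1 <= r -> dyadic_majorant r x x = +oo%E.
Proof.
move=> r1; rewrite /dyadic_majorant eseries_ge1_eqy // => k.
rewrite /dyadic_term indic_dyadic_interval ?subrr ?normr0 ?invr_ge0 ?exprn_ge0 //.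
by rewrite mulr1 lee_fin exprn_ege1.
Qed.

Lemma measurable_dyadic_majorant (D : set R) r x : 0 <= r ->
  measurable_fun D (dyadic_majorant r x).
Proof.
move=> r0; apply: emeasurable_funD; first exact: measurable_cst.
apply: (@ge0_emeasurable_sum _ _ _ _ _ predT) => [k t _ _|k _].
  by rewrite lee_fin dyadic_term_ge0.
by apply/measurable_EFinP; exact: measurable_dyadic_term.
Qed.

Lemma integral_dyadic_majorant_le a b r x : a < b -> 0 < r < 2 ->
  (\int[lebesgue_measure]_(t in `[a, b]) dyadic_majorant r x t
     <= (dyadic_majorant_bound a b r)%:E)%E.
Proof.
move=> ab /andP[r_gt0 r_lt2]; have r0 := ltW r_gt0.
have mterm k : measurable_fun `[a, b] (fun t => (dyadic_term r x k t)%:E).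
  by apply/measurable_EFinP; exact: measurable_dyadic_term.
rewrite ge0_integralD //; last 2 first.
- by move=> t _; apply: nneseries_ge0 => k _ _; rewrite lee_fin dyadic_term_ge0.
- apply: (@ge0_emeasurable_sum _ _ _ _ _ predT) => [k t _ _|k _]; last exact: mterm.
  by rewrite lee_fin dyadic_term_ge0.
rewrite /dyadic_majorant_bound EFinD integral_itv_cst // mul1r leeD2l //.
rewrite integral_nneseries // => [|k t _]; last by rewrite lee_fin dyadic_term_ge0.
apply: le_trans (_ : \sum_(k <oo) (geometric (2 * r) (r / 2) k)%:E <= _)%E.
  apply: lee_nneseries => [k _ _|k _]; last exact: integral_dyadic_term_le.
  by apply: integral_ge0 => t _; rewrite lee_fin dyadic_term_ge0.
apply: nneseries_geometric_le; first by rewrite mulr_ge0.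
by rewrite divr_gt0 //= ltr_pdivrMr // mul1r.
Qed.

Lemma dyadic_scale (d : R) : 0 < d <= 1 -> exists k, 2 ^- k.+1 < d <= 2 ^- k.
Proof.
move=> /andP[d0 d1].
have ex_n : exists n, 2 ^- n < d.
  exists (Num.truncn d^-1).+1; rewrite invf_plt ?posrE ?exprn_gt0 //.
  apply: lt_le_trans (Num.Theory.truncnS_gt _) _.
  by rewrite -natrX ler_nat ltnW // ltn_expl.
case: (ex_minnP ex_n) => -[|k]; first by rewrite expr0 invr1 ltNge d1.
by move=> lt_k min_k; exists k; rewrite lt_k leNgt; apply/negP => /min_k; rewrite ltnn.
Qed.

Lemma powR_le_dyadic_majorant s x t u : 0 <= s -> 0 <= u ->
  (t != x -> u <= `|t - x|^-1) -> ((u `^ s)%:E <= dyadic_majorant (2 `^ s) x t)%E.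
Proof.
move=> s0 u0 ux; have r1 : 1 <= 2 `^ s.
  by rewrite -{1}(powRr0 2); apply: ler_powR => //; rewrite ler1n.
have r0 := le_trans ler01 r1.
have [->|tx] := eqVneq t x; first by rewrite dyadic_majorant_center ?leey.
have powR_le p q : 0 <= p -> p <= q -> p `^ s <= q `^ s.
  by move=> p0 pq; apply: ge0_ler_powR; rewrite ?nnegrE // (le_trans p0).
set d := `|t - x|; have d0 : 0 < d by rewrite normr_gt0 subr_eq0.
have le_us : u `^ s <= d^-1 `^ s by exact/powR_le/ux.
have [d1|d1] := leP d 1; last first.
  apply: le_trans (dyadic_majorant_ge1 _ _ _ r0); rewrite lee_fin.
  apply: le_trans le_us (le_trans (powR_le _ 1 _ _) _).
  - by rewrite invr_ge0 ltW.
  - by rewrite invf_le1 // ltW.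
  - by rewrite powR1.
have [|k /andP[ltk lek]] := @dyadic_scale d; first by rewrite d0 d1.
apply: le_trans (dyadic_majorant_ge_term _ _ _ _ r0 lek); rewrite lee_fin.
apply: le_trans le_us _.
have -> : (2 `^ s) ^+ k.+1 = (2 ^+ k.+1) `^ s.
  by rewrite -powR_mulrn ?powR_ge0 // powRAC powR_mulrn.
apply: powR_le; first by rewrite invr_ge0 ltW.
by rewrite -[2 ^+ k.+1]invrK lef_pV2 ?posrE ?invr_gt0 ?exprn_gt0 // ltW.
Qed.

Lemma integral_dyadic_majorant_comb_le {I : Type} (s : seq I) (c x : I -> R) {a b r c0} :
  a < b -> 0 < r < 2 -> 0 <= c0 -> (forall i, 0 <= c i) ->
  (\int[lebesgue_measure]_(t in `[a, b])
      (c0%:E + \sum_(i <- s) (c i)%:E * dyadic_majorant r (x i) t)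
   <= (c0 * (b - a) + (\sum_(i <- s) c i) * dyadic_majorant_bound a b r)%:E)%E.
Proof.
move=> ab r02 c00 c_ge0; have r0 : 0 <= r by case/andP: r02 => /ltW.
have term0 i t : (0 <= (c i)%:E * dyadic_majorant r (x i) t)%E.
  by rewrite mule_ge0 ?lee_fin ?c_ge0 ?dyadic_majorant_ge0.
have mterm i : measurable_fun `[a, b] (fun t => (c i)%:E * dyadic_majorant r (x i) t)%E.
  by apply: measurable_funeM; exact: measurable_dyadic_majorant.
rewrite ge0_integralD //; last 2 first.
- by move=> t _; rewrite sume_ge0.
- exact: emeasurable_sum.
rewrite EFinD; apply: leeD.
  by rewrite integral_itv_cst.
rewrite ge0_integral_sum // mulr_suml -sumEFin; apply: lee_sum => i _.
rewrite ge0_integralZl_EFin //; last 2 first.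
- by move=> t _; exact: dyadic_majorant_ge0.
- exact: measurable_dyadic_majorant.
by rewrite EFinM lee_wpmul2l ?lee_fin ?c_ge0 ?integral_dyadic_majorant_le.
Qed.

End dyadic_majorant.

Lemma inv_normc_powR_le_dyadic_majorant (R : realType) (y : R -> R) (z : R[i]) (s t : R) :
  0 <= s ->
  (((ComplexField.Normc.normc (graph_curve y t - z))^-1 `^ s)%:E
     <= dyadic_majorant (2 `^ s)%R (complex.Re z) t)%E.
Proof.
move=> s0; apply: powR_le_dyadic_majorant => // [|tz].
  by rewrite invr_ge0; case: (graph_curve y t - z) => p q /=; exact: sqrtr_ge0.
have tz_gt0 : 0 < `|t - complex.Re z| by rewrite normr_gt0 subr_eq0.
rewrite lef_pV2 ?posrE ?normc_ge_dist_Re //.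
apply: (lt_le_trans tz_gt0); rewrite /graph_curve; exact: normc_ge_dist_Re.
Qed.

Section graph_majorant.
Context {R : realType} (a b S : R) {m : nat} (z : 'I_m -> R[i]) (bt : 'I_m -> R).
Hypotheses (S_ge0 : 0 <= S) (bt_gt0 : forall i, 0 < bt i).

(* One dyadic majorant centred at each Re z_i, plus one at each endpoint. *)
Definition majorant_indices : seq ('I_m + bool) :=
  [:: inr true, inr false & map inl (index_enum 'I_m)].

Definition majorant_weight (j : 'I_m + bool) : R :=
  if j is inl i then S * (bt i / \sum_k bt k) else 1.

Definition majorant_center (j : 'I_m + bool) : R :=
  match j with inl i => complex.Re (z i) | inr e => if e then a else b end.

Definition graph_majorant t : \bar R :=
  (S%:E + \sum_(j <- majorant_indices) (majorant_weight j)%:E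
             * dyadic_majorant (2 `^ \sum_k bt k) (majorant_center j) t)%E.

Lemma sum_bt_ge0 : 0 <= \sum_k bt k.
Proof. by apply: sumr_ge0 => k _; exact: ltW. Qed.

Lemma majorant_weight_ge0 j : 0 <= majorant_weight j.
Proof. by case: j => [i|_] //=; rewrite mulr_ge0 // divr_ge0 ?sum_bt_ge0 // ltW. Qed.

Lemma sum_majorant_weight_le : \sum_(j <- majorant_indices) majorant_weight j <= 2 + S.
Proof.
rewrite !big_cons big_map /= -mulr_sumr addrA lerD2l ler_piMr // -mulr_suml.
by have [->|?] := eqVneq (\sum_k bt k) 0; [rewrite invr0 mulr0 | rewrite divff].
Qed.

Lemma dyadic_majorant_exponent_ge1 : 1 <= 2 `^ \sum_k bt k.
Proof. by rewrite -{1}(powRr0 2); apply: ler_powR; rewrite ?ler1n ?sum_bt_ge0. Qed.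

Lemma graph_majorant_endpoint t : t \in [:: a; b] -> graph_majorant t = +oo%E.
Proof.
move=> t_ab; have G_ge0 j : (0 <= (majorant_weight j)%:E * dyadic_majorant
    (2 `^ \sum_k bt k) (majorant_center j) t)%E.
  rewrite mule_ge0 ?lee_fin ?majorant_weight_ge0 // dyadic_majorant_ge0 //.
rewrite /graph_majorant (_ : (\sum_(j <- _) _)%E = +oo%E) ?addey //.
apply/esum_eqyP => [j _|]; first by rewrite gt_eqF // (lt_le_trans ltNy0).
exists (inr (t == a)); split => //; first by case: (t == a).
have -> : majorant_center (inr (t == a)) = t.
  by move: t_ab; rewrite !inE /=; case: eqP => // _ /eqP.
by rewrite mul1e dyadic_majorant_center // dyadic_majorant_exponent_ge1.
Qed.

Lemma integral_graph_majorant_le : a < b -> \sum_k bt k < 1 ->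
  (\int[lebesgue_measure]_(t in `[a, b]) graph_majorant t
   <= (S * (b - a) + (2 + S) * dyadic_majorant_bound a b (2 `^ \sum_k bt k))%:E)%E.
Proof.
move=> ab sum_lt1; rewrite /graph_majorant; set r := 2 `^ \sum_k bt k.
have r_ge1 : 1 <= r := dyadic_majorant_exponent_ge1.
have r_lt2 : r < 2 by apply: ltr1_powR; rewrite ?ltr1n.
have bound_ge0 : 0 <= dyadic_majorant_bound a b r.
  by rewrite /dyadic_majorant_bound; apply: addr_ge0; [|apply: divr_ge0]; lra.
apply: le_trans (integral_dyadic_majorant_comb_le _ _ _ ab _ S_ge0 majorant_weight_ge0) _.
  by rewrite r_lt2 (lt_le_trans ltr01 r_ge1).
by rewrite lee_fin lerD2l ler_wpM2r // sum_majorant_weight_le.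
Qed.

End graph_majorant.

Section lipschitz_graph.
Context {R : realType} {a b L : R} {y : R -> R}.
Hypothesis Ly : Lipschitz_on_interval a b L y.

Lemma Lipschitz_on_interval_ge0 : a < b -> 0 <= L.
Proof.
move=> ab; have := Ly a b; rewrite !in_itv /= !lexx (ltW ab) => /(_ isT isT).
by move/(le_trans (normr_ge0 _)); rewrite pmulr_lge0 // normr_gt0 subr_eq0 lt_eqF.
Qed.

Lemma Lipschitz_derive1_le t : a < t < b -> `|derive1 y t| <= L.
Proof.
move=> /andP[ta tb]; have L0 := Lipschitz_on_interval_ge0 (lt_trans ta tb).
set q := fun h : R => h^-1 *: (y (h + t) - y t).
have q_le : \forall h \near (0 : R)^', `|q h| <= L.
  have e0 : 0 < Num.min (t - a) (b - t) by rewrite lt_min !subr_gt0 ta tb.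
  have h_small : \forall h \near (0 : R)^', `|h| < Num.min (t - a) (b - t).
    apply: nbhs_dnbhs; apply/nbhs_ballP; exists (Num.min (t - a) (b - t)) => // h.
    by rewrite /ball /= sub0r normrN.
  near=> h.
  have h0 : h != 0 by near: h; exact: nbhs_dnbhs_neq.
  have : `|h| < Num.min (t - a) (b - t) by near: h.
  rewrite lt_min !ltr_norml => /andP[/andP[? ?] /andP[? ?]].
  have htI : h + t \in `[a, b]%R by rewrite in_itv /=; apply/andP; split; lra.
  have tI : t \in `[a, b]%R by rewrite in_itv /= !ltW.
  have := Ly _ _ htI tI; rewrite addrK => Lh.
  by rewrite /q normrZ normfV ler_pdivrMl ?normr_gt0 // mulrC.
have [cv|ncv] := pselect (cvg (q @ (0 : R)^')); last first.
  (* divergent difference quotients give the junk value 0 *)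
  by rewrite /derive1 -/q (dvgP ncv) normr0.
rewrite leNgt; apply/negP => L_lt.
have q_gt : \forall h \near (0 : R)^', L < `|q h| by exact: cvgr_norm_gt cv _ L_lt.
near (0 : R)^' => h.
have L_lt_qh : L < `|q h| by near: h.
have qh_le_L : `|q h| <= L by near: h.
by have := lt_le_trans L_lt_qh qh_le_L; rewrite ltxx.
Unshelve. all: by end_near.
Qed.

Lemma speed_le_Lipschitz t : a < t < b -> speed y t <= Num.sqrt (1 + L ^+ 2).
Proof.
move/Lipschitz_derive1_le; rewrite ler_norml => /andP[? ?].
by rewrite /speed ler_sqrt ?addr_ge0 ?sqr_ge0 // lerD2l; nra.
Qed.

Lemma weight_integrand_le {m} (z : 'I_m -> R[i]) {bt : 'I_m -> R} {t : R} :
  (forall i, 0 < bt i) -> a < t < b ->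
  weight_integrand z bt y t <= Num.sqrt (1 + L ^+ 2) *
    (1 + \sum_i (bt i / \sum_j bt j) *
           (ComplexField.Normc.normc (graph_curve y t - z i))^-1 `^ (\sum_j bt j)).
Proof.
move=> bt_gt0 tab; rewrite /weight_integrand mulrC.
apply: ler_pM; [exact: sqrtr_ge0|by apply: prodr_ge0 => i _; exact: powR_ge0| |].
  exact: speed_le_Lipschitz.
apply: prod_powR_le_weighted_sum => // i.
by rewrite invr_ge0; case: (graph_curve y t - z i) => p q /=; exact: sqrtr_ge0.
Qed.

Lemma weight_integrand_le_graph_majorant {m} (z : 'I_m -> R[i]) {bt : 'I_m -> R} :
  (forall i, 0 < bt i) -> forall t, t \in `[a, b]%R ->
  ((weight_integrand z bt y t)%:E
     <= graph_majorant a b (Num.sqrt (1 + L ^+ 2)) z bt t)%E.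
Proof.
move=> bt_gt0 t; rewrite in_itv /= => /andP[a_le_t t_le_b].
have [t_ab|t_nab] := boolP (t \in [:: a; b]).
  by rewrite graph_majorant_endpoint ?leey.
have t_in : a < t < b.
  by move: t_nab; rewrite !inE !lt_neqAle a_le_t t_le_b negb_or eq_sym => /andP[-> ->].
set S := Num.sqrt (1 + L ^+ 2); set beta := \sum_k bt k.
have S_ge0 : 0 <= S := sqrtr_ge0 _.
have beta_ge0 : 0 <= beta := sum_bt_ge0 _ bt_gt0.
apply: le_trans (_ : (S%:E + \sum_i (S * (bt i / beta))%:E
    * dyadic_majorant (2 `^ beta) (complex.Re (z i)) t) <= _)%E; last first.
  have G_ge0 e : (0 <= dyadic_majorant (2 `^ beta) e t)%E.
    exact/dyadic_majorant_ge0/(le_trans ler01)/(dyadic_majorant_exponent_ge1 _ bt_gt0).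
  by rewrite leeD2l // !big_cons big_map /= !mul1e; do 2 apply: lee_paddl => //.
have := weight_integrand_le z bt_gt0 t_in; rewrite -/beta -/S -lee_fin => /le_trans; apply.
rewrite mulrDr mulr1 EFinD leeD2l // mulr_sumr -sumEFin; apply: lee_sum => i _.
rewrite mulrA EFinM; apply: lee_wpmul2l.
  by rewrite lee_fin mulr_ge0 // divr_ge0 // ltW.
exact: inv_normc_powR_le_dyadic_majorant.
Qed.

End lipschitz_graph.

Lemma weight_integrand_ge0 (R : realType) m (z : 'I_m -> R[i]) (bt : 'I_m -> R) y t :
  0 <= weight_integrand z bt y t.
Proof.
by rewrite mulr_ge0 ?sqrtr_ge0 // prodr_ge0 // => i _; exact: powR_ge0.
Qed.

Local Close Scope classical_set_scope.

Theorem lemma2p8 (R : realType) (L a b beta : R) :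
  a < b -> beta < 1 ->
  exists C : R,
    forall (m : nat) (z : 'I_m -> R[i]) (betas : 'I_m -> R) (y : R -> R),
      (forall i, 0 < betas i) ->
      \sum_(i < m) betas i = beta ->
      Lipschitz_on_interval a b L y ->
      (\int[lebesgue_measure]_(t in `[a, b]) (weight_integrand z betas y t)%:E
        < C%:E)%E.
Proof.
move=> ab beta_lt1; set S := Num.sqrt (1 + L ^+ 2).
exists (S * (b - a) + (2 + S) * dyadic_majorant_bound a b (2 `^ beta) + 1).
move=> m z bs y bs_gt0 bs_sum Ly.
have integrand_ge0 t : t \in `[a, b] -> (0 <= (weight_integrand z bs y t)%:E)%E.
  by rewrite lee_fin weight_integrand_ge0.
apply: le_lt_trans (ge0_le_integral_nonmeasurable (mu := lebesgue_measure)
  integrand_ge0 (weight_integrand_le_graph_majorant Ly z bs_gt0)) _.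
apply: le_lt_trans (integral_graph_majorant_le _ _ _ _ _ (sqrtr_ge0 _) bs_gt0 ab _) _.
  by rewrite bs_sum.
by rewrite bs_sum lte_fin ltrDl.
Qed.
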